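(* Let $F:\mathcal{P}(V,A)\to S_2(A)$ be an irreducible, weakly viable consular election rule satisfying SPP and SPO. If $\{a,b\}$ is an edge of the range graph $\mathcal{G}(F)$, then there exists $c\in A$ such that $\{a,c\}$ and $\{b,c\}$ are also edges of $\mathcal{G}(F)$ (so $a,b,c$ form a $3$-cycle).
   Context: $V$ is a finite nonempty set of voters, $A$ a finite set of alternatives; a profile $P$ assigns to each voter $i$ a linear order $P_i$ on $A$; $P_i'P_{-i}$ replaces voter $i$'s order by $P_i'$; $P|_B$ is the profile of restrictions to $B\subseteq A$. $S_2(A)$ is the set of 2-element subsets of $A$; a consular election rule is a map $F:\mathcal{P}(V,A)\to S_2(A)$. SPO: for all $P$, $i$, $P_i'$, $\mathrm{best}(P_i,F(P))\succeq_i\mathrm{best}(P_i,F(P_i'P_{-i}))$; SPP: same with $\mathrm{worst}$, where $\mathrm{best}(P_i,W)$, $\mathrm{worst}(P_i,W)$ are the $P_i$-best and $P_i$-worst elements of $W$. Weakly viable: every $a\in A$ lies in $F(P)$ for some $P$. $F$ is reducible if there is a partition $A=B\uplus C$ and social choice functions $G:\mathcal{P}(V,B)\to B$, $H:\mathcal{P}(V,C)\to C$ with $F(P)=\{G(P|_B),H(P|_C)\}$ for all $P$; irreducible means not reducible. The range graph $\mathcal{G}(F)$ has vertex set $A$ and edge set equal to the range of $F$. *)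

From mathcomp Require Import all_boot.
Unset Printing Implicit Defensive.

(* A (strict) linear order on a finite type T: r x y means "x is strictly preferred to y". *)
Definition is_linear_order {T : finType} (r : rel T) : Prop :=
  irreflexive r /\ transitive r /\ (forall x y, x != y -> r x y || r y x).

Definition lorder (T : finType) := { r : rel T | is_linear_order r }.

Definition lrel {T : finType} (o : lorder T) : rel T := proj1_sig o.

Definition profile (V T : finType) := V -> lorder T.

Definition update {V T : finType} (P : profile V T) (i : V) (Pi' : lorder T)
  : profile V T := fun j => if j == i then Pi' else P j.

Definition restr_rel {T : finType} (B : {set T}) (r : rel T) : rel {x : T | x \in B} :=
  fun x y => r (val x) (val y).

Lemma restr_linear {T : finType} (B : {set T}) (o : lorder T) :
  is_linear_order (@restr_rel T B (lrel o)).
Proof.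
case: o => r [Hi [Ht Hc]]; rewrite /restr_rel /lrel /=; split; last split.
- by move=> x; apply: Hi.
- by move=> x y z; apply: Ht.
- by move=> x y Hxy; apply: Hc; apply: contra Hxy => /eqP H; apply/eqP; apply: val_inj.
Qed.

Definition restr_order {T : finType} (B : {set T}) (o : lorder T)
  : lorder {x : T | x \in B} := exist _ _ (restr_linear B o).

Definition restr_profile {V T : finType} (B : {set T}) (P : profile V T)
  : profile V {x : T | x \in B} := fun i => restr_order B (P i).

Definition consular_rule {V A : finType} (F : profile V A -> {set A}) : Prop :=
  forall P, #|F P| = 2.

Definition is_best {T : finType} (r : rel T) (W : {set T}) (x : T) : Prop :=
  x \in W /\ forall y, y \in W -> y != x -> r x y.
Definition is_worst {T : finType} (r : rel T) (W : {set T}) (x : T) : Prop :=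
  x \in W /\ forall y, y \in W -> y != x -> r y x.

Definition weakpref {T : finType} (r : rel T) (x y : T) : Prop := x = y \/ r x y.

Definition SPO {V A : finType} (F : profile V A -> {set A}) : Prop :=
  forall P i Pi' x y, is_best (lrel (P i)) (F P) x ->
    is_best (lrel (P i)) (F (update P i Pi')) y -> weakpref (lrel (P i)) x y.

Definition SPP {V A : finType} (F : profile V A -> {set A}) : Prop :=
  forall P i Pi' x y, is_worst (lrel (P i)) (F P) x ->
    is_worst (lrel (P i)) (F (update P i Pi')) y -> weakpref (lrel (P i)) x y.

Definition weakly_viable {V A : finType} (F : profile V A -> {set A}) : Prop :=
  forall a : A, exists P, a \in F P.

Definition reducible {V A : finType} (F : profile V A -> {set A}) : Prop :=
  exists (B : {set A})
    (G : profile V {x : A | x \in B} -> {x : A | x \in B})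
    (H : profile V {x : A | x \in ~: B} -> {x : A | x \in ~: B}),
    forall P, F P = [set val (G (restr_profile B P)); val (H (restr_profile (~: B) P))].

Definition irreducible {V A : finType} (F : profile V A -> {set A}) : Prop :=
  ~ reducible F.

Definition range_edge {V A : finType} (F : profile V A -> {set A}) (a b : A) : Prop :=
  exists P, F P = [set a; b].

(** If no alternative were adjacent in the range graph to both [a] and [b],
    then every outcome would contain exactly one neighbour of [b]: an outcome
    containing two neighbours [u], [v] of [b] is an edge [{u, v}], and any
    alternative [t] that ever wins is adjacent to [u] or to [v] (make
    every voter rank [t] first, then [u], then [v]: SPO keeps [t] among the
    winners and SPP keeps the winners within [{t, u, v}]). Applied to [t := a]
    and [t := b] this excludes both two and zero neighbours of [b]. But when a
    set [B] meets every outcome exactly once, SPO and SPP force the winner in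
    [B] never to rise in the ranking of a voter who changes his order, so it
    depends only on the restriction of the profile to [B]; the same holds for
    the complement, and [F] is reducible. *)

From mathcomp Require Import all_boot.
From Stdlib Require Import FunctionalExtensionality Classical ClassicalEpsilon.

Set Implicit Arguments.
Unset Strict Implicit.

Section LinearOrders.
Variable T : finType.
Implicit Types (o : lorder T) (r : rel T) (S W : {set T}) (u v w x y z : T).

Lemma lorder_irr o u : lrel o u u = false.
Proof. by case: o => r [irr _] /=; exact: irr. Qed.

Lemma lorder_trans o u v w : lrel o u v -> lrel o v w -> lrel o u w.
Proof. by case: o => r [_ [tr _]] /=; apply: tr. Qed.

Lemma lorder_total o u v : u != v -> lrel o u v || lrel o v u.
Proof. by case: o => r [_ [_ tot]] /=; exact: tot. Qed.

Lemma lorder_asym o u v : lrel o u v -> lrel o v u = false.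
Proof. by move=> uv; apply/negP => /(lorder_trans uv); rewrite lorder_irr. Qed.

Lemma lorder_neq o u v : lrel o u v -> u != v.
Proof. by apply: contraTneq => ->; rewrite lorder_irr. Qed.

Lemma weakpref_neq_lt r x y : weakpref r x y -> x != y -> r x y.
Proof. by case=> [->|//]; rewrite eqxx. Qed.

Lemma weakpref_ltF o x y : weakpref (lrel o) x y -> lrel o y x = false.
Proof. by case=> [->|]; [apply: lorder_irr | apply: lorder_asym]. Qed.

Lemma weakpref_lt_trans o x y z :
  weakpref (lrel o) x y -> lrel o y z -> lrel o x z.
Proof. by case=> [->//|]; apply: lorder_trans. Qed.

Lemma weakpref_trans o x y z :
  weakpref (lrel o) x y -> weakpref (lrel o) y z -> weakpref (lrel o) x z.
Proof. by move=> xy [<-//|yz]; right; apply: weakpref_lt_trans yz. Qed.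

Lemma is_best_weakpref r S x y : is_best r S x -> y \in S -> weakpref r x y.
Proof. by case=> _ best yS; case: (eqVneq y x) => [->|]; [left | right; apply: best]. Qed.

Lemma is_worst_weakpref r S x y : is_worst r S x -> y \in S -> weakpref r y x.
Proof. by case=> _ worst yS; case: (eqVneq y x) => [->|]; [left | right; apply: worst]. Qed.

Lemma lorder_set2 o S : #|S| = 2 -> exists u v, S = [set u; v] /\ lrel o u v.
Proof.
move/eqP/cards2P=> [u [v [uv ->]]].
by case/orP: (lorder_total o uv) => ?; [exists u, v | exists v, u; rewrite setUC].
Qed.

Lemma card2_is_best o S : #|S| = 2 -> exists x, is_best (lrel o) S x.
Proof.
move=> /(lorder_set2 o) [u [v [-> uv]]]; exists u; split; first by rewrite set21.
by move=> z; rewrite in_set2 => /orP [/eqP -> /eqP | /eqP -> _].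
Qed.

Lemma card2_is_worst o S : #|S| = 2 -> exists x, is_worst (lrel o) S x.
Proof.
move=> /(lorder_set2 o) [u [v [-> uv]]]; exists v; split; first by rewrite set22.
by move=> z; rewrite in_set2 => /orP [/eqP -> _ | /eqP -> /eqP].
Qed.

Lemma card2_set2 S x : #|S| = 2 -> x \in S -> exists2 y, y != x & S = [set x; y].
Proof.
move=> S2 xS; have /cards1P [y Sx] : #|S :\ x| == 1.
  by move: S2; rewrite (cardsD1 x) xS add1n => -[->].
have /setD1P [yx _] : y \in S :\ x by rewrite Sx set11.
by exists y; rewrite // -(setD1K xS) Sx.
Qed.

Definition upper_set r W := forall w z, w \in W -> z \notin W -> r w z.

Definition rank_order : lorder T.
Proof.
exists (fun u v => enum_rank u < enum_rank v); split; last split.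
- by move=> u; rewrite ltnn.
- by move=> v u w; apply: ltn_trans.
- by move=> u v; rewrite -neq_ltn; apply: contra => /eqP/val_inj/enum_rank_inj ->.
Defined.

Definition top_rel z r : rel T :=
  fun u v => (u == z) && (v != z) || [&& u != z, v != z & r u v].

Lemma top_rel_linear z o : is_linear_order (top_rel z (lrel o)).
Proof.
rewrite /top_rel; split; last split.
- by move=> u; rewrite lorder_irr; case: (u == z).
- move=> v u w; case: (eqVneq u z) => [->|uz]; case: (eqVneq v z) => [->|vz];
  case: (eqVneq w z) => [->|wz] //=; exact: lorder_trans.
- move=> u v uv; case: (eqVneq u z) => [uz|uz]; case: (eqVneq v z) => [vz|vz] //=.
  + by rewrite uz vz eqxx in uv.
  + exact: lorder_total.
Qed.

Definition top_order z o : lorder T := exist _ _ (top_rel_linear z o).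

Lemma top_order_best z o : is_best (lrel (top_order z o)) setT z.
Proof. by split=> // v _ vz; rewrite /= /top_rel eqxx vz. Qed.

Lemma top_order_other z o u v :
  u != z -> v != z -> lrel (top_order z o) u v = lrel o u v.
Proof. by move=> uz vz; rewrite /= /top_rel uz vz (negbTE uz). Qed.

Lemma upper_set_top z o W :
  upper_set (lrel o) W -> upper_set (lrel (top_order z o)) (z |: W).
Proof.
move=> upW w u; rewrite !in_setU1 negb_or => wzW /andP [uz uW].
case: (eqVneq w z) wzW => [-> _ | wz wW]; first by rewrite /= /top_rel eqxx uz.
by rewrite top_order_other //; apply: upW.
Qed.

End LinearOrders.

Section Profiles.
Variables V T : finType.
Implicit Types (P Q : profile V T) (M N : lorder T).

Lemma update_eq P i M : update P i M i = M.
Proof. by rewrite /update eqxx. Qed.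

Lemma update_update P i M N : update (update P i M) i N = update P i N.
Proof. by apply: functional_extensionality => j; rewrite /update; case: (j == i). Qed.

Lemma update_id P i : update P i (P i) = P.
Proof. by apply: functional_extensionality => j; rewrite /update; case: eqP => // ->. Qed.

Lemma profile_walk (Pi : profile V T -> Prop) P P' : Pi P ->
  (forall Q i, (forall j, Q j = P j \/ Q j = P' j) -> Pi Q -> Pi (update Q i (P' i))) ->
  Pi P'.
Proof.
move=> PiP step.
pose mix (s : seq V) : profile V T := fun j => if j \in s then P' j else P j.
have Pi_mix s : Pi (mix s).
  elim: s => [|i s IHs]; first by have -> : mix [::] = P by apply: functional_extensionality.
  have -> : mix (i :: s) = update (mix s) i (P' i).
    by apply: functional_extensionality => j; rewrite /mix /update inE; case: eqP => [->|].
  by apply: step IHs => j; rewrite /mix; case: (j \in s); [right | left].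
have -> : P' = mix (enum V) by apply: functional_extensionality => j; rewrite /mix mem_enum.
exact: Pi_mix.
Qed.

Lemma restr_profile_agree (B : {set T}) P P' :
  restr_profile B P = restr_profile B P' ->
  forall i u v, u \in B -> v \in B -> lrel (P i) u v = lrel (P' i) u v.
Proof.
move=> eqPP' i u v uB vB.
exact: (f_equal (fun R : profile V {x | x \in B} => lrel (R i) (exist _ u uB) (exist _ v vB)) eqPP').
Qed.

End Profiles.

Section ConsularRule.
Variables (V A : finType) (F : profile V A -> {set A}).
Hypotheses (F2 : consular_rule F) (F_SPP : SPP F) (F_SPO : SPO F).
Implicit Types (P Q : profile V A) (M N o : lorder A) (B W : {set A}).

Lemma SPO_new_dominated P i M z :
  z \in F (update P i M) -> exists2 w, w \in F P & weakpref (lrel (P i)) w z.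
Proof.
move=> zPM; have [x bestP] := card2_is_best (P i) (F2 P).
have [y bestPM] := card2_is_best (P i) (F2 (update P i M)).
exists x; first by case: bestP.
exact: weakpref_trans (F_SPO bestP bestPM) (is_best_weakpref bestPM zPM).
Qed.

Lemma SPP_old_dominates P i M z :
  z \in F P -> exists2 w, w \in F (update P i M) & weakpref (lrel (P i)) z w.
Proof.
move=> zP; have [x worstP] := card2_is_worst (P i) (F2 P).
have [y worstPM] := card2_is_worst (P i) (F2 (update P i M)).
exists y; first by case: worstPM.
exact: weakpref_trans (is_worst_weakpref worstP zP) (F_SPP worstP worstPM).
Qed.

Lemma SPO_top_stable Q i o t :
  is_best (lrel o) setT t -> t \in F Q -> t \in F (update Q i o).
Proof.
move=> [_ top] tQ.
have tQ' : t \in F (update (update Q i o) i (Q i)) by rewrite update_update update_id.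
have [w wQo] := SPO_new_dominated tQ'; rewrite update_eq => wt.
case: (eqVneq w t) => [<-//|wnt].
by have := top w (in_setT w) wnt; rewrite (weakpref_ltF wt).
Qed.

Lemma SPP_upper_stable Q i o W :
  upper_set (lrel o) W -> F Q \subset W -> F (update Q i o) \subset W.
Proof.
move=> upW /subsetP QW; apply/subsetP => z zQo; apply/negPn/negP => zW.
have [w] := SPP_old_dominates i (Q i) zQo; rewrite update_update update_id update_eq.
by move=> /QW wW /weakpref_ltF; rewrite upW.
Qed.

Lemma range_edge_third x y t P : range_edge F x y -> t \in F P ->
  range_edge F t x \/ range_edge F t y.
Proof.
move=> [Pxy Fxy] tP.
pose L := top_order t (top_order x (top_order y (rank_order A))).
pose W := t |: (x |: (y |: set0)).
have upW : upper_set (lrel L) W by do 3 apply: upper_set_top; move=> ?; rewrite inE.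
pose PL : profile V A := fun=> L.
have PL_W : F PL \subset W.
  apply: (profile_walk (Pi := fun Q => F Q \subset W) (P := Pxy)) => [|Q i _].
    by rewrite Fxy; apply/subsetP => z; rewrite !inE => /orP [] ->; rewrite ?orbT.
  exact: SPP_upper_stable.
have tPL : t \in F PL.
  apply: (profile_walk (Pi := fun Q => t \in F Q) (P := P)) => // Q i _.
  exact/SPO_top_stable/top_order_best.
have [s st FPL] := card2_set2 (F2 PL) tPL.
have : s \in W by apply: (subsetP PL_W); rewrite FPL set22.
by rewrite !inE (negbTE st) orbF /= => /orP [] /eqP sE; [left | right]; exists PL; rewrite FPL sE.
Qed.

Definition splits B :=
  forall Q, exists g h, [/\ g \in B, h \notin B & F Q = [set g; h]].

Lemma splitsC B : splits B -> splits (~: B).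
Proof.
move=> splitB Q; have [g [h [gB hB FQ]]] := splitB Q.
by exists h, g; rewrite !in_setC gB hB setUC.
Qed.

(* [d] is a junk default, never returned when [B] splits [F]. *)
Definition winner_in (d : A) B Q : A := odflt d [pick z in F Q :&: B].

Lemma winner_in_eq d B Q g h :
  F Q = [set g; h] -> g \in B -> h \notin B -> winner_in d B Q = g.
Proof.
move=> FQ gB hB; rewrite /winner_in; case: pickP => [z | none] /=.
  by rewrite inE FQ in_set2 => /andP [/orP [] /eqP -> // zB]; rewrite zB in hB.
by have := none g; rewrite inE FQ set21 gB.
Qed.

Lemma winner_in_mem d B Q : splits B -> winner_in d B Q \in B.
Proof. by move=> /(_ Q) [g [h [gB hB FQ]]]; rewrite (winner_in_eq d FQ gB hB). Qed.

Section Splitting.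
Variables (d : A) (B : {set A}).
Hypothesis splitB : splits B.

Lemma winner_notin_mem Q : winner_in d (~: B) Q \notin B.
Proof. by rewrite -in_setC; apply/winner_in_mem/splitsC. Qed.

Lemma F_winner_in Q : F Q = [set winner_in d B Q; winner_in d (~: B) Q].
Proof.
have [g [h [gB hB FQ]]] := splitB Q.
rewrite (winner_in_eq d FQ gB hB) (@winner_in_eq d (~: B) Q h g) ?in_setC ?gB //.
by rewrite FQ setUC.
Qed.

Lemma mem_F_winner_in Q z :
  z \in F Q -> z = winner_in d B Q \/ z = winner_in d (~: B) Q.
Proof. by rewrite F_winner_in in_set2 => /orP [] /eqP; [left | right]. Qed.

Lemma winner_in_uniq Q z : z \in F Q -> z \in B -> z = winner_in d B Q.
Proof.
case/mem_F_winner_in => [//|-> zB].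
by have := winner_notin_mem Q; rewrite zB.
Qed.

Lemma winner_in_F Q : winner_in d B Q \in F Q.
Proof. by rewrite F_winner_in set21. Qed.

Lemma winner_notin_F Q : winner_in d (~: B) Q \in F Q.
Proof. by rewrite F_winner_in set22. Qed.

(* Otherwise put [x] on top of voter [i]'s order: SPO keeps [x] winning, and
   SPP between [P] and the new profile, in both directions, puts the new
   winner [k] outside [B] both below and above [g]. *)
Lemma winner_in_not_raised P i M :
  ~~ lrel (P i) (winner_in d B (update P i M)) (winner_in d B P).
Proof.
set L := P i; set g := winner_in d B P; set h := winner_in d (~: B) P.
set x := winner_in d B (update P i M).
apply/negP => xg.
have [gB hB xB] : [/\ g \in B, h \notin B & x \in B].
  by split; [apply: winner_in_mem | apply: winner_notin_mem | apply: winner_in_mem].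
have hx : h != x by apply: contraTneq xB => <-.
have gx : g != x by rewrite eq_sym (lorder_neq xg).
have hg : lrel L h g.
  have [w /mem_F_winner_in [] -> wx] := SPO_new_dominated (winner_in_F (update P i M)).
    by rewrite (weakpref_ltF wx) in xg.
  exact: weakpref_lt_trans wx xg.
pose N := top_order x L.
have xN : x = winner_in d B (update P i N).
  apply: winner_in_uniq xB; rewrite -(update_update P i M N).
  exact/SPO_top_stable/winner_in_F/top_order_best.
set k := winner_in d (~: B) (update P i N).
have kx : k != x by apply: contraTneq xB => <-; apply: winner_notin_mem.
have gk : lrel L g k.
  have [w /mem_F_winner_in [] -> gw] := SPP_old_dominates i N (winner_in_F P).
    by move: gw; rewrite -xN => /weakpref_ltF; rewrite xg.
  rewrite -/g -/k in gw.
  by apply: weakpref_neq_lt gw _; apply: contraTneq gB => ->; apply: winner_notin_mem.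
have kg : lrel N k g.
  have := SPP_old_dominates i L (winner_notin_F (update P i N)).
  rewrite update_update update_id update_eq => -[w /mem_F_winner_in [] -> kw].
    rewrite -/g -/k in kw; apply: weakpref_neq_lt kw _.
    by apply: contraTneq gB => <-; apply: winner_notin_mem.
  rewrite -/h -/k in kw; apply: weakpref_lt_trans kw _.
  by rewrite /N top_order_other.
by rewrite /N top_order_other // (lorder_asym gk) in kg.
Qed.

Lemma winner_in_restr P P' :
  restr_profile B P = restr_profile B P' -> winner_in d B P' = winner_in d B P.
Proof.
move=> /restr_profile_agree agree.
apply: (profile_walk (Pi := fun Q => winner_in d B Q = winner_in d B P)) => // Q i mixQ wQ.
have up := winner_in_not_raised Q i (P' i).
have := winner_in_not_raised (update Q i (P' i)) i (Q i).
rewrite update_update update_id update_eq => down.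
have agreeQ : lrel (Q i) (winner_in d B Q) (winner_in d B (update Q i (P' i))) =
              lrel (P' i) (winner_in d B Q) (winner_in d B (update Q i (P' i))).
  by case: (mixQ i) => ->; first by apply: agree; apply: winner_in_mem.
rewrite -wQ; apply/eqP; apply: contraT => neq.
by case/orP: (lorder_total (Q i) neq) => lt; [rewrite lt in up | rewrite -agreeQ lt in down].
Qed.

End Splitting.

Lemma splits_reducible (d : A) B : splits B -> reducible F.
Proof.
move=> splitB; have splitCB := splitsC splitB.
have P0 : inhabited (profile V A) by constructor; exact: (fun=> rank_order A).
pose lift (C : {set A}) (R : profile V {x | x \in C}) :=
  epsilon P0 (fun Q => restr_profile C Q = R).
have liftK C P : restr_profile C (lift C (restr_profile C P)) = restr_profile C P.
  by apply: (epsilon_spec P0 (fun Q => restr_profile C Q = _)); exists P.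
exists B.
exists (fun R => exist _ (winner_in d B (lift B R)) (winner_in_mem d _ splitB)).
exists (fun R => exist _ (winner_in d (~: B) (lift (~: B) R)) (winner_in_mem d _ splitCB)).
move=> P /=; rewrite -(winner_in_restr d splitB (liftK B P)).
by rewrite -(winner_in_restr d splitCB (liftK (~: B) P)); apply: F_winner_in.
Qed.

Definition range_nbhd b : {set A} :=
  [set z | is_left (excluded_middle_informative (range_edge F b z))].

Lemma mem_range_nbhd b z : z \in range_nbhd b <-> range_edge F b z.
Proof. by rewrite inE; case: excluded_middle_informative. Qed.

Lemma range_nbhd_splits a b : weakly_viable F ->
  ~ (exists c, range_edge F a c /\ range_edge F b c) -> splits (range_nbhd b).
Proof.
move=> viable no_common Q; have /eqP/cards2P [u [v [_ FQ]]] := F2 Q.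
have uv : range_edge F u v by exists Q.
have [[Pa aPa] [Pb bPb]] := (viable a, viable b).
case uB: (u \in range_nbhd b); case vB: (v \in range_nbhd b).
- case: no_common; case: (range_edge_third uv aPa) => [au | av];
    [exists u | exists v]; split=> //; exact/mem_range_nbhd.
- by exists u, v; rewrite vB.
- by exists v, u; rewrite uB setUC.
- by case: (range_edge_third uv bPb) => /mem_range_nbhd; rewrite ?uB ?vB.
Qed.

Lemma common_neighbour : irreducible F -> weakly_viable F ->
  forall a b, exists c, range_edge F a c /\ range_edge F b c.
Proof.
move=> irr viable a b; apply: NNPP => no_common; apply: irr.
exact: splits_reducible a _ (range_nbhd_splits viable no_common).
Qed.

End ConsularRule.

Theorem corollary40 (V A : finType) (F : profile V A -> {set A}) :
  0 < #|V| ->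
  consular_rule F ->
  irreducible F -> weakly_viable F -> SPP F -> SPO F ->
  forall a b : A, range_edge F a b ->
  exists c : A, range_edge F a c /\ range_edge F b c.
Proof.
move=> _ F2 irr viable F_SPP F_SPO a b _.
exact: common_neighbour.
Qed.
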